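(* Let $\lambda_2<0$, $C_1,C_2\in\mathbb{R}$, and $q(t)=C_1t+\frac{C_2}{\lambda_2}\big(e^{\lambda_2 t}-1\big)+1$. Then $q$ vanishes at some $t>0$ if and only if one of the following holds: (1) $C_1<0$; (2) $C_1=0$, $C_2<\lambda_2$; (3) $C_1>0$, $C_2<0$, $C_1+C_2<0$ and $\lambda_2+C_1\ln\!\left(-\tfrac{C_1}{C_2}\right)\ge C_1+C_2$.
   Context: This $q$ is the decisive function of the extended system $\dot{\mathbf v}=-v_1\mathbf v+Q\mathbf v$ when $Q$ is diagonalizable with eigenvalues $\lambda_1=0>\lambda_2$ (with $C_1=\frac{a_{22}}{\det A}(a_{11}v_1(0)+a_{12}v_2(0))$, $C_2=-\frac{a_{12}}{\det A}(a_{21}v_1(0)+a_{22}v_2(0))$, $AQA^{-1}=\mathrm{diag}(\lambda_1,\lambda_2)$); finite-time blow-up of the extended system is equivalent to $q$ vanishing at some $t>0$. *)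

From Stdlib Require Import Reals.
Open Scope R_scope.

Definition qfun (lam2 C1 C2 t : R) : R :=
  C1 * t + (C2 / lam2) * (exp (lam2 * t) - 1) + 1.

(** The function [q] is a line perturbed by a bounded term, so for [C1 <> 0]
    it eventually has the sign of [C1]; for [C1 = 0] the equation [q t = 0]
    can be solved explicitly.  For [C2 <= 0] it is convex, lying above its
    tangent lines: the tangent at [0] rules out a zero when [C1 + C2 >= 0],
    and otherwise [q] attains its minimum at the critical point [t0] with
    [exp (lam2 t0) = - C1 / C2 < 1], where [lam2 q(t0)] is exactly
    [lam2 + C1 ln (- C1 / C2) - (C1 + C2)].  A positive zero then exists iff
    [q(t0) <= 0], by the intermediate value theorem to the right of [t0]. *)

From Stdlib Require Import Reals Lra Psatz.
Open Scope R_scope.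

Lemma exp_tangent_le (a b : R) : exp a * (1 + (b - a)) <= exp b.
Proof.
  replace (exp b) with (exp a * exp (b - a)) by (rewrite <- exp_plus; f_equal; ring).
  apply Rmult_le_compat_l; [left; apply exp_pos | apply exp_ineq1_le].
Qed.

Lemma exp_lt_1 (x : R) : x < 0 -> exp x < 1.
Proof. intros Hx; rewrite <- exp_0; apply exp_increasing, Hx. Qed.

Lemma ln_lt_0 (x : R) : 0 < x < 1 -> ln x < 0.
Proof. intros Hx; rewrite <- ln_1; apply ln_increasing; lra. Qed.

Lemma qfun_continuity (l C1 C2 : R) : continuity (qfun l C1 C2).
Proof. unfold qfun; reg. Qed.

Lemma qfun_0 (l C1 C2 : R) : qfun l C1 C2 0 = 1.
Proof. unfold qfun; rewrite !Rmult_0_r, exp_0; ring. Qed.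

Lemma qfun_root_of_sign_change (l C1 C2 a b : R) :
  0 <= a <= b -> qfun l C1 C2 a * qfun l C1 C2 b <= 0 ->
  exists t, 0 < t /\ qfun l C1 C2 t = 0.
Proof.
  intros Hab Hsign.
  destruct (IVT_cor _ a b (qfun_continuity l C1 C2)) as [t [Ht Hq]]; [lra | exact Hsign |].
  exists t; split; [| exact Hq].
  destruct (Req_dec t 0) as [-> | Ht0]; [rewrite qfun_0 in Hq; lra | lra].
Qed.

(* The critical point of [qfun l C1 C2], where its derivative
   [C1 + C2 exp (l t)] vanishes. *)
Definition qfun_argmin (l C1 C2 : R) : R := ln (- (C1 / C2)) / l.

Section QFun.

Variables (l C1 C2 : R).
Hypothesis Hl : l < 0.

Local Notation q := (qfun l C1 C2).

Lemma exp_mul_le_1 (t : R) : 0 <= t -> exp (l * t) <= 1.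
Proof.
  intros Ht; destruct (Req_dec t 0) as [-> | Ht0].
  - rewrite Rmult_0_r, exp_0; lra.
  - left; apply exp_lt_1; nra.
Qed.

Lemma qfun_near_linear (t : R) :
  0 <= t -> C1 * t + 1 - Rabs (C2 / l) <= q t <= C1 * t + 1 + Rabs (C2 / l).
Proof.
  intros Ht; unfold qfun.
  pose proof (exp_pos (l * t)); pose proof (exp_mul_le_1 t Ht).
  pose proof (Rle_abs (C2 / l)); pose proof (Rle_abs (- (C2 / l))).
  rewrite Rabs_Ropp in *; split; nra.
Qed.

Lemma qfun_eventually_pos : 0 < C1 -> exists T, forall t, T < t -> 0 < q t.
Proof.
  intros HC1; exists (Rabs (C2 / l) / C1); intros t Ht.
  apply Rmult_lt_compat_r with (r := C1) in Ht; [| exact HC1].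
  unfold Rdiv in Ht; rewrite Rmult_assoc, Rinv_l, Rmult_1_r in Ht by lra.
  assert (Ht0 : 0 <= t) by (pose proof (Rabs_pos (C2 / l)); nra).
  pose proof (qfun_near_linear t Ht0); lra.
Qed.

Lemma qfun_eventually_neg : C1 < 0 -> exists T, forall t, T < t -> q t < 0.
Proof.
  intros HC1; exists ((Rabs (C2 / l) + 1) / - C1); intros t Ht.
  apply Rmult_lt_compat_r with (r := - C1) in Ht; [| lra].
  unfold Rdiv in Ht; rewrite Rmult_assoc, Rinv_l, Rmult_1_r in Ht by lra.
  assert (Ht0 : 0 <= t) by (pose proof (Rabs_pos (C2 / l)); nra).
  pose proof (qfun_near_linear t Ht0); lra.
Qed.

Lemma qfun_root_of_C1_neg : C1 < 0 -> exists t, 0 < t /\ q t = 0.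
Proof.
  intros HC1; destruct (qfun_eventually_neg HC1) as [T HT].
  set (t := Rmax T 0 + 1).
  assert (HqT : q t < 0) by (apply HT; unfold t; pose proof (Rmax_l T 0); lra).
  apply qfun_root_of_sign_change with 0 t.
  - unfold t; pose proof (Rmax_r T 0); lra.
  - rewrite qfun_0; lra.
Qed.

Lemma qfun_tangent_le (s t : R) :
  C2 <= 0 -> q s + (C1 + C2 * exp (l * s)) * (t - s) <= q t.
Proof.
  intros HC2; unfold qfun.
  assert (HK : 0 <= C2 / l).
  { destruct (Req_dec C2 0) as [-> | HC2']; [right; field; lra |].
    left; apply Rdiv_neg_neg; lra. }
  pose proof (Rmult_le_compat_l _ _ _ HK (exp_tangent_le (l * s) (l * t))) as Htan.
  replace (C2 / l * (exp (l * s) * (1 + (l * t - l * s))))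
    with (C2 / l * exp (l * s) + C2 * exp (l * s) * (t - s)) in Htan by (field; lra).
  lra.
Qed.

Lemma qfun_pos_of_C2_nonneg (t : R) : 0 <= C1 -> 0 <= C2 -> 0 <= t -> 0 < q t.
Proof.
  intros HC1 HC2 Ht; unfold qfun.
  assert (HK : C2 / l <= 0).
  { destruct (Req_dec C2 0) as [-> | HC2']; [right; field; lra |].
    left; apply Rdiv_pos_neg; lra. }
  pose proof (exp_mul_le_1 t Ht); nra.
Qed.

Lemma qfun_pos_of_sum_nonneg (t : R) : C2 <= 0 -> 0 <= C1 + C2 -> 0 <= t -> 0 < q t.
Proof.
  intros HC2 Hsum Ht; pose proof (qfun_tangent_le 0 t HC2) as Htan.
  rewrite qfun_0, Rmult_0_r, exp_0 in Htan; nra.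
Qed.

Lemma qfun_C1_0_root_iff : (exists t, 0 < t /\ qfun l 0 C2 t = 0) <-> C2 < l.
Proof.
  split.
  - intros [t [Ht Hq]]; unfold qfun in Hq.
    assert (He : exp (l * t) < 1) by (apply exp_lt_1; nra).
    pose proof (exp_pos (l * t)).
    assert (HK : 1 < C2 / l) by nra.
    replace C2 with (C2 / l * l) by (field; lra); nra.
  - intros HC2; set (a := 1 - l / C2).
    assert (Ha : 0 < a < 1).
    { assert (Hdiv : l / C2 * - C2 = - l) by (field; lra).
      pose proof (Rdiv_neg_neg l C2 Hl ltac:(lra)); unfold a; nra. }
    exists (ln a / l); split.
    + apply Rdiv_neg_neg; [apply ln_lt_0, Ha | exact Hl].
    + unfold qfun; replace (l * (ln a / l)) with (ln a) by (field; lra).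
      rewrite exp_ln by lra; unfold a; field; lra.
Qed.

Section Convex.

Hypotheses (HC1 : 0 < C1) (HC2 : C2 < 0).

Local Notation t0 := (qfun_argmin l C1 C2).

Lemma exp_qfun_argmin : exp (l * t0) = - (C1 / C2).
Proof.
  unfold qfun_argmin; replace (l * _) with (ln (- (C1 / C2))) by (field; lra).
  apply exp_ln; pose proof (Rdiv_pos_neg C1 C2 HC1 HC2); lra.
Qed.

Lemma qfun_argmin_le (t : R) : q t0 <= q t.
Proof.
  pose proof (qfun_tangent_le t0 t (Rlt_le _ _ HC2)) as Htan.
  rewrite exp_qfun_argmin in Htan.
  replace (C1 + C2 * - (C1 / C2)) with 0 in Htan by (field; lra); lra.
Qed.

Lemma qfun_argmin_pos : C1 + C2 < 0 -> 0 < t0.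
Proof.
  intros Hsum; unfold qfun_argmin; apply Rdiv_neg_neg; [apply ln_lt_0 | exact Hl].
  assert (Hdiv : - (C1 / C2) * - C2 = C1) by (field; lra).
  pose proof (Rdiv_pos_neg C1 C2 HC1 HC2); nra.
Qed.

Lemma qfun_argmin_value : l * q t0 = l + C1 * ln (- (C1 / C2)) - (C1 + C2).
Proof.
  unfold qfun; rewrite exp_qfun_argmin; unfold qfun_argmin; field; lra.
Qed.

Lemma qfun_root_iff_argmin_nonpos :
  C1 + C2 < 0 -> (exists t, 0 < t /\ q t = 0) <-> q t0 <= 0.
Proof.
  intros Hsum; split.
  - intros [t [_ Hq]]; rewrite <- Hq; apply qfun_argmin_le.
  - intros Hmin; destruct (qfun_eventually_pos HC1) as [T HT].
    pose proof (qfun_argmin_pos Hsum); pose proof (Rmax_l T t0); pose proof (Rmax_r T t0).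
    set (t := Rmax T t0 + 1).
    assert (Hqt : 0 < q t) by (apply HT; unfold t; lra).
    apply qfun_root_of_sign_change with t0 t; [unfold t; lra | nra].
Qed.

End Convex.

Lemma qfun_root_iff_C1_pos :
  0 < C1 ->
  (exists t, 0 < t /\ q t = 0) <->
  (C2 < 0 /\ C1 + C2 < 0 /\ l + C1 * ln (- (C1 / C2)) >= C1 + C2).
Proof.
  intros HC1; destruct (Rlt_le_dec C2 0) as [HC2 | HC2].
  2: { split; [intros [t [Ht Hq]] | lra].
       pose proof (qfun_pos_of_C2_nonneg t (Rlt_le _ _ HC1) HC2 (Rlt_le _ _ Ht)); lra. }
  destruct (Rlt_le_dec (C1 + C2) 0) as [Hsum | Hsum].
  2: { split; [intros [t [Ht Hq]] | lra].
       pose proof (qfun_pos_of_sum_nonneg t (Rlt_le _ _ HC2) Hsum (Rlt_le _ _ Ht)); lra. }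
  rewrite (qfun_root_iff_argmin_nonpos HC1 HC2 Hsum).
  pose proof (qfun_argmin_value HC1 HC2) as Hval.
  split; intros Hmin; [split; [| split] |]; nra.
Qed.

End QFun.

Theorem mainTheorem5 (lam2 C1 C2 : R) (Hlam : lam2 < 0) :
  (exists t : R, 0 < t /\ qfun lam2 C1 C2 t = 0) <->
  (C1 < 0
   \/ (C1 = 0 /\ C2 < lam2)
   \/ (0 < C1 /\ C2 < 0 /\ C1 + C2 < 0 /\
       lam2 + C1 * ln (- (C1 / C2)) >= C1 + C2)).
Proof.
  destruct (Rtotal_order C1 0) as [HC1 | [-> | HC1]].
  - split; intros _; [left; exact HC1 | exact (qfun_root_of_C1_neg lam2 C1 C2 Hlam HC1)].
  - rewrite (qfun_C1_0_root_iff lam2 C2 Hlam).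
    split; [intros H; right; left; split; [reflexivity | exact H] |].
    intros [H | [[_ H] | [H _]]]; lra.
  - rewrite (qfun_root_iff_C1_pos lam2 C1 C2 Hlam HC1).
    split; [intros H; right; right; split; [exact HC1 | exact H] |].
    intros [H | [[H _] | [_ H]]]; [lra | lra | exact H].
Qed.
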